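(* Let $A$ be a finite additive poset, let $\mu:A\times A\to\mathbb{Z}$ be the Möbius function of its partial order, and let $\mathcal{A}\subset A$ be the set of atoms of $A$. Then every $a\in A$ satisfies $a=\sum_{b\in\mathcal{A}}\mu(b,a)\,b$ (integer coefficients acting on the $\mathbb{Z}/2\mathbb{Z}$-vector space $A$).
   Context: An additive poset is a pair $(A,\le)$ where $A$ is an abelian group and $\le$ is a partial order on $A$ such that for all $a,b,c\in A$: $(\ast)$ if $b\le a$ and $c\le a$ then $b+c\le a$; $(\ast\ast)$ if $a\le b$ and $a\le c$ then $a\le a+b+c$. Every element satisfies $a+a=0$. An atom is a nonzero $a$ whose tail $\{x:x\le a\}$ equals $\{0,a\}$. The Möbius function is determined by $\mu(a,a)=1$, $\mu(a,b)=0$ if $a\not\le b$, and $\sum_{a\le c\le b}\mu(a,c)=0$ if $a\le b$, $a\neq b$. *)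

From HB Require Import structures.
From mathcomp Require Import all_boot all_order all_algebra.
Set Implicit Arguments. Unset Strict Implicit. Unset Printing Implicit Defensive.
Import GRing.Theory.
Local Open Scope ring_scope.

Definition additive_poset (A : zmodType) (le : rel A) : Prop :=
  [/\ (forall a, le a a),
      (forall a b, le a b -> le b a -> a = b),
      (forall a b c, le a b -> le b c -> le a c),
      (forall a b c, le b a -> le c a -> le (b + c) a)
    & (forall a b c, le a b -> le a c -> le a (a + b + c))].

Definition is_atom (A : finZmodType) (le : rel A) (a : A) : bool :=
  (a != 0) && [forall x : A, le x a == ((x == 0) || (x == a))].

(* The defining equations of the Moebius function of a finite poset;
   on a finite poset they determine mu uniquely. *)
Definition is_moebius (A : finType) (le : rel A) (mu : A -> A -> int) : Prop :=
  [/\ (forall a, mu a a = 1),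
      (forall a b, ~~ le a b -> mu a b = 0)
    & (forall a b, le a b -> a != b ->
         \sum_(c : A | le a c && le c b) mu a c = 0)].

From HB Require Import structures.
From mathcomp Require Import all_boot all_order all_algebra.
Set Implicit Arguments. Unset Strict Implicit. Unset Printing Implicit Defensive.
Import GRing.Theory.
Local Open Scope ring_scope.

(* Every element of an additive poset has order 2 and the tail of any b is a
   subgroup, so for each nonzero y in the tail, t |-> t + y pairs its
   elements and the tail sums to y *+ (#tail / 2).  Applying this to two
   distinct nonzero elements of the tail shows that the tail sums to 0
   unless b is an atom, in which case it sums to b.  Hence
   sum_(b atom) b mu(b, a) = sum_b sum_(c <= b) c mu(b, a), and exchanging
   the sums, the dual Moebius identity sum_(b >= c) mu(b, a) = [c = a]
   (mu is a left inverse of the zeta matrix, hence also a right inverse)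
   leaves a. *)

Lemma sum_involution (I : finType) (V : nmodType) (F : I -> V) (s : I -> I)
    (c : V) (P : {set I}) :
  (forall t, t \in P -> [/\ s t \in P, s t != t, s (s t) = t & F t + F (s t) = c]) ->
  \sum_(t in P) F t = c *+ (#|P|./2).
Proof.
elim: {P}_.+1 {-2}P (ltnSn #|P|) => // n IH P ltPn hP.
have [-> | [t tP]] := set_0Vmem P; first by rewrite big_set0 cards0.
have [stP nst sst tst] := hP t tP.
set P' := P :\ t :\ s t.
have cardP : #|P| = #|P'|.+2.
  by rewrite (cardsD1 t P) (cardsD1 (s t) (P :\ t)) !inE nst stP tP.
have sumP : \sum_(i in P) F i = c + \sum_(i in P') F i.
  rewrite (bigD1 t) //= (bigD1 (s t)) /=; last by rewrite nst stP.
  rewrite addrA tst; congr (_ + _); apply: eq_bigl => i.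
  by rewrite !inE; case: (i \in P) (i != t) (i != s t) => [] [] [].
rewrite sumP IH; first by rewrite cardP /= -mulrS.
  by move: ltPn; rewrite cardP ltnS => /ltnW.
move=> u; rewrite !inE => /and3P [ust ut uP].
have [suP nsu ssu tsu] := hP u uP.
split=> //; rewrite suP andbT; apply/andP; split.
  by apply: contra ut => /eqP h; rewrite -ssu h sst.
by apply: contra ust => /eqP h; rewrite -h ssu.
Qed.

Lemma mulrn_odd (V : zmodType) (y : V) k : y + y = 0 -> y *+ k = y *+ odd k.
Proof.
move=> yy; elim: k => // k IH.
by rewrite mulrS IH /=; case: (odd k); rewrite /= ?yy ?addr0.
Qed.

Lemma sum_kernel_mul1C (I : finType) (R : comPzRingType) (f g : I -> I -> R) :
  (forall x y, \sum_c f x c * g c y = (x == y)%:R) ->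
  forall x y, \sum_c g x c * f c y = (x == y)%:R.
Proof.
move=> fg x y.
pose M (h : I -> I -> R) : 'M[R]_#|I| := \matrix_(i, j) h (enum_val i) (enum_val j).
have sum_enum (i j : 'I_#|I|) h1 h2 :
    (M h1 *m M h2) i j = \sum_c h1 (enum_val i) c * h2 c (enum_val j).
  rewrite mxE; under eq_bigr do rewrite !mxE.
  by rewrite -(big_enum_val (fun c => h1 (enum_val i) c * h2 c (enum_val j))).
have /mulmx1C/matrixP/(_ (enum_rank x) (enum_rank y)) : M f *m M g = 1%:M.
  by apply/matrixP => i j; rewrite sum_enum fg (inj_eq enum_val_inj) !mxE.
by rewrite sum_enum !enum_rankK !mxE (inj_eq enum_rank_inj).
Qed.

Section Moebius.
Variables (T : finType) (le : rel T) (mu : T -> T -> int).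
Hypothesis le_refl : forall x, le x x.
Hypothesis le_anti : forall x y, le x y -> le y x -> x = y.
Hypothesis le_trans : forall x y z, le x y -> le y z -> le x z.
Hypothesis muP : is_moebius le mu.

Lemma moebius_zeta x y : \sum_c mu x c * (le c y)%:R = (x == y)%:R.
Proof.
case: muP => mu_refl mu_nle mu_sum.
have [lexy | nlexy] := boolP (le x y); last first.
  have -> : (x == y) = false by apply: contraNF nlexy => /eqP <-; apply: le_refl.
  apply: big1 => c _; case lecy: (le c y); last by rewrite mulr0.
  by rewrite mu_nle ?mul0r //; apply: contra nlexy => /le_trans; apply.
have -> : \sum_c mu x c * (le c y)%:R = \sum_(c | le x c && le c y) mu x c.
  rewrite [RHS]big_mkcond; apply: eq_bigr => c _.
  case lexc: (le x c); case: (le c y); rewrite /= ?mulr1 ?mulr0 //.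
  by rewrite mu_nle ?lexc.
have [<- | nexy] := eqVneq x y; last by rewrite mu_sum.
rewrite (bigD1 x) /= ?le_refl // big1 ?addr0 ?mu_refl // => c.
by case/andP=> /andP [lexc lecx]; rewrite (le_anti lecx lexc) eqxx.
Qed.

Lemma zeta_moebius x y : \sum_c (le x c)%:R * mu c y = (x == y)%:R.
Proof. exact: sum_kernel_mul1C moebius_zeta x y. Qed.

End Moebius.

Section AdditivePoset.
Variables (A : finZmodType) (le : rel A).
Hypothesis leA : additive_poset le.

Lemma additive_poset_addrr (a : A) : a + a = 0.
Proof.
case: leA => le_refl le_anti _ le_add le_add3.
apply: (addIr a); rewrite add0r.
have le_aa := le_add a a a (le_refl a) (le_refl a).
by apply: le_anti; [exact: le_add le_aa (le_refl a) | exact: le_add3 (le_refl a) (le_refl a)].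
Qed.

Lemma additive_poset_le0 (a : A) : le 0 a.
Proof.
case: leA => le_refl _ _ le_add _.
by rewrite -(additive_poset_addrr a); apply: le_add.
Qed.

Lemma sum_tail_pairs (b y : A) : le y b -> y != 0 ->
  \sum_(c | le c b) c = y *+ (#|[set c | le c b]|./2).
Proof.
case: leA => _ _ _ le_add _ leyb y0.
rewrite (eq_bigl (fun c => c \in [set c | le c b])); last by move=> c; rewrite inE.
apply: (@sum_involution _ _ (fun t => t) (fun t => t + y) y) => t; rewrite !inE => letb.
split; first exact: le_add.
- by rewrite -[X in _ != X]addr0 (inj_eq (addrI t)).
- by rewrite -addrA additive_poset_addrr addr0.
- by rewrite addrA additive_poset_addrr add0r.
Qed.

Lemma sum_tail (b : A) : \sum_(c | le c b) c = if is_atom le b then b else 0.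
Proof.
case: leA => le_refl le_anti _ _ _.
have [atom_b | not_atom] := boolP (is_atom le b).
  case/andP: atom_b => b0 /forallP tail_b.
  rewrite (eq_bigl (fun c => (c == 0) || (c == b))); last by move=> c; apply/eqP.
  rewrite (bigD1 b) ?eqxx ?orbT // (bigD1 0) /= ?eqxx ?(eq_sym 0) ?b0 //.
  rewrite big1 ?addr0 // => c /andP [/andP [/orP [] /eqP -> //]].
  by rewrite eqxx.
have [-> | b0] := eqVneq b 0.
  rewrite (bigD1 0) ?le_refl //= big1 ?addr0 // => c /andP [lec0 c0].
  exact: le_anti lec0 (additive_poset_le0 c).
move: not_atom; rewrite /is_atom b0 negb_forall => /existsP [x].
have [-> | x0] := eqVneq x 0; first by rewrite additive_poset_le0.
have [-> | xb] := eqVneq x b; first by rewrite le_refl.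
case lexb: (le x b) => // _.
have := sum_tail_pairs (le_refl b) b0.
rewrite (sum_tail_pairs lexb x0) (mulrn_odd _ (additive_poset_addrr x)).
rewrite (mulrn_odd _ (additive_poset_addrr b)).
by case: odd => // /eqP; rewrite (negbTE xb).
Qed.

End AdditivePoset.

Theorem theorem6p1 (A : finZmodType) (le : rel A) (mu : A -> A -> int) :
  additive_poset le -> is_moebius le mu ->
  forall a : A,
    a = \sum_(b : A | is_atom le b) b *~ mu b a.
Proof.
move=> leA muP a.
have [le_refl le_anti le_trans _ _] := leA.
have atom_term b : (if is_atom le b then b *~ mu b a else 0)
    = \sum_c (if le c b then c *~ mu b a else 0).
  by rewrite -big_mkcond -mulrz_suml sum_tail //; case: ifP; rewrite ?mul0rz.
have dual_term c : \sum_b (if le c b then c *~ mu b a else 0) = c *~ (c == a)%:R.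
  rewrite -(zeta_moebius le_refl le_anti le_trans muP) mulrz_sumr.
  by apply: eq_bigr => b _; case: (le c b); rewrite /= ?mul1r ?mul0r ?mulr0z.
rewrite big_mkcond (eq_bigr _ (fun b _ => atom_term b)) exchange_big /=.
rewrite (eq_bigr _ (fun c _ => dual_term c)) (bigD1 a) //= eqxx big1 ?addr0 //.
by move=> c /negbTE ->; rewrite mulr0z.
Qed.
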